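(* There exist absolute constants $C,c>0$ such that the following holds. Let $x$ be a random vector in $\{0,1\}^n$ whose coordinates are i.i.d. Bernoulli with parameter $p\in(0,1/2]$, and let $y$ be a random vector in $\{0,1\}^m$, independent of $x$, whose coordinates are i.i.d. Bernoulli with parameter $q\in(0,1)$. Let $(x_k,y_k)$, $k=1,\ldots,K$, be sampled independently from the distribution of $(x,y)$. Let $m_0\ge m$ be such that $Kq\ge C\log m_0$, $np\ge C\log(Km_0)$, and $Kq\log(Km_0)\le cn$. Then, with probability at least $1-3m/m_0$, there exists $F\in\mathcal{T}(n,m)$ such that $F(x_k)=y_k$ for all $k=1,\ldots,K$. Moreover, one may take $F=h(Wx-b)$ with $W:=\sum_{k=1}^K y_k\bar{x}_k^{\mathsf T}$, where $\bar x_k = x_k-\mathbb{E}x_k$, and $b$ any vector (fixed or dependent on the data) whose coordinates all satisfy $\frac{np}{8}<b(i)<\frac{np}{4}$.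
   Context: $\mathcal{T}(n,m)$ is the set of maps $F:\mathbb{R}^n\to\{0,1\}^m$ of the form $F(x)=h(Wx-b)$ with $W$ a real $m\times n$ matrix, $b\in\mathbb{R}^m$, and $h$ the Heaviside function applied componentwise ($h(t)=0$ for $t<0$, $h(t)=1$ for $t>0$). *)

From HB Require Import structures.
From Stdlib Require Import Reals.
From mathcomp Require Import all_boot all_order all_algebra.
From mathcomp Require Import boolp Rstruct.
Set Implicit Arguments. Unset Strict Implicit. Unset Printing Implicit Defensive.
Import Order.TTheory GRing.Theory Num.Theory.
Local Open Scope ring_scope.

Definition bern (p : R) (b : bool) : R := if b then p else 1 - p.

Definition sample (n m K : nat) : finType :=
  {ffun 'I_K -> {ffun 'I_n -> bool} * {ffun 'I_m -> bool}}.

Definition sample_weight (n m K : nat) (p q : R) (d : sample n m K) : R :=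
  \prod_(k < K) ((\prod_(j < n) bern p ((d k).1 j)) *
                 (\prod_(i < m) bern q ((d k).2 i))).

Definition Prob (n m K : nat) (p q : R) (E : sample n m K -> Prop) : R :=
  \sum_(d : sample n m K) (if `[< E d >] then sample_weight p q d else 0).

Definition vec01 (l : nat) (x : {ffun 'I_l -> bool}) : 'cV[R]_l :=
  \col_(j < l) ((x j : nat)%:R).

(* F = h(W x - b) maps x to y, with h(t)=0 for t<0 and h(t)=1 for t>0
   (h(0) is undefined, so each coordinate of W x - b must be nonzero with
   the sign prescribed by y). *)
Definition thr_maps (n m : nat) (W : 'M[R]_(m, n)) (b : 'cV[R]_m)
    (x : {ffun 'I_n -> bool}) (y : {ffun 'I_m -> bool}) : Prop :=
  forall i : 'I_m,
    let t := (W *m vec01 x - b) i 0 in (y i -> 0 < t) /\ (~~ y i -> t < 0).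

Definition interpolable (n m K : nat) (d : sample n m K) : Prop :=
  exists (W : 'M[R]_(m, n)) (b : 'cV[R]_m),
    forall k : 'I_K, thr_maps W b (d k).1 (d k).2.

Definition hebb_W (n m K : nat) (p : R) (d : sample n m K) : 'M[R]_(m, n) :=
  \sum_(k < K) (vec01 (d k).2 *m (vec01 (d k).1 - const_mx p)^T).

(* A pessimistic estimator.  The Hebbian matrix gives
   (W x_k)_i = y_k(i) |x_k| (1 - p) + N_{k,i},  N_{k,i} = sum_{l <> k} y_l(i) <x_k, x_l - p 1>,
   so the threshold map works on x_k as soon as 3np/4 < |x_k| and |N_{k,i}| < np/8.
   Every way this can fail, together with the auxiliary failure sum_l y_l(i) >= 3Kq,
   is dominated by an exponential that is >= 1 on the failure; their sum, the potential,
   is < 1 on a good data set, so P(good) >= 1 - E[potential] by Markov's inequality.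
   The expectations are Chernoff bounds: products of independent Bernoulli moment
   generating functions, bounded through e^t <= 1 + t + 2t^2 for |t| <= 1/2.  For the
   crosstalk, the exponent carries a compensator making the contribution of every other
   sample a factor of conditional mean at most 1. *)

From HB Require Import structures.
From Stdlib Require Import Reals.
From mathcomp Require Import all_boot all_order all_algebra.
From mathcomp Require Import boolp Rstruct lra ring.
Set Implicit Arguments. Unset Strict Implicit. Unset Printing Implicit Defensive.
Import Order.TTheory GRing.Theory Num.Theory.
Local Open Scope ring_scope.

(* Otherwise Stdlib's [exp] and every lemma argument of type [R] would be parsed in
   [R_scope], out of reach of [lra] and the ring lemmas. *)
#[local] Arguments exp _%_ring_scope.
Bind Scope ring_scope with R.

Lemma expD (x y : R) : exp x * exp y = exp (x + y).
Proof. exact: expRD. Qed.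

Lemma exp_gt0 (x : R) : 0 < exp x.
Proof. exact/RltP/exp_pos. Qed.

Lemma exp_ge1Dx (x : R) : 1 + x <= exp x.
Proof. exact/RleP/exp_ineq1_le. Qed.

Lemma ltr_exp (x y : R) : (exp x < exp y) = (x < y).
Proof.
by apply/idP/idP => /RltP h; apply/RltP; [exact: exp_lt_inv | exact: exp_increasing].
Qed.

Lemma ler_exp (x y : R) : (exp x <= exp y) = (x <= y).
Proof. by rewrite !leNgt ltr_exp. Qed.

Lemma exp_lt1 (x : R) : (exp x < 1) = (x < 0).
Proof. by rewrite -expR0 ltr_exp. Qed.

Lemma exp_lnK (z : R) : 0 < z -> exp (ln z) = z.
Proof. by move=> /RltP; exact: exp_ln. Qed.

Lemma expN_ln (z : R) : 0 < z -> exp (- ln z) * z = 1.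
Proof. by move=> z_gt0; rewrite -[X in _ * X](exp_lnK z_gt0) expD addNr expR0. Qed.

Lemma ln_gt0 (z : R) : 1 < z -> 0 < ln z.
Proof. by move=> z_gt1; rewrite -ltr_exp expR0 exp_lnK // (lt_trans ltr01). Qed.

Lemma exp_sum (I : Type) (r : seq I) (P : pred I) (F : I -> R) :
  exp (\sum_(i <- r | P i) F i) = \prod_(i <- r | P i) exp (F i).
Proof. by apply: (big_morph _ (fun x y => esym (expD x y))); rewrite expR0. Qed.

Lemma exp_le_quadratic (x : R) : -(1/2) <= x <= 1/2 -> exp x <= 1 + x + 2 * x ^+ 2.
Proof.
move=> /andP[x_ge x_le].
have e_gt0 := exp_gt0 x.
have e_mul : exp x * (1 - x) <= 1.
  have : exp x * (1 - x) <= exp x * exp (- x).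
    by rewrite ler_wpM2l ?(ltW e_gt0) //; exact: exp_ge1Dx.
  by rewrite expD addrN expR0.
have poly : 1 <= (1 - x) * (1 + x + 2 * x ^+ 2).
  have : 0 <= x ^+ 2 * (1 - 2 * x) by apply: mulr_ge0; [exact: sqr_ge0 | lra].
  have -> : (1 - x) * (1 + x + 2 * x ^+ 2) = 1 + x ^+ 2 * (1 - 2 * x) by ring.
  lra.
have quad_ge0 : 0 <= 1 + x + 2 * x ^+ 2 by have := sqr_ge0 x; nra.
apply: (le_trans (y := exp x * ((1 - x) * (1 + x + 2 * x ^+ 2)))).
  by rewrite -{1}[exp x]mulr1 ler_wpM2l ?(ltW e_gt0).
by rewrite mulrA -[X in _ <= X]mul1r ler_wpM2r.
Qed.

Lemma ler_sum_term (I : finType) (F : I -> R) (i : I) :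
  (forall j, 0 <= F j) -> F i <= \sum_j F j.
Proof.
by move=> F_ge0; rewrite (bigD1 i) //= lerDl; apply: sumr_ge0 => j _; exact: F_ge0.
Qed.

Section Expectation.
Variables (T : finType) (w : T -> R).

Definition expect (X : T -> R) : R := \sum_t w t * X t.

Lemma expectZ (c : R) (X : T -> R) : expect (fun t => c * X t) = c * expect X.
Proof. by rewrite /expect mulr_sumr; apply: eq_bigr => t _; rewrite mulrCA. Qed.

Lemma expectD (X Y : T -> R) : expect (fun t => X t + Y t) = expect X + expect Y.
Proof. by rewrite /expect -big_split; apply: eq_bigr => t _; rewrite mulrDr. Qed.

Lemma expect_sum (I : Type) (r : seq I) (X : I -> T -> R) :
  expect (fun t => \sum_(i <- r) X i t) = \sum_(i <- r) expect (X i).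
Proof. by rewrite /expect exchange_big; apply: eq_bigr => t _; rewrite mulr_sumr. Qed.

Hypothesis w_ge0 : forall t, 0 <= w t.

Lemma expect_ge0 (X : T -> R) : (forall t, 0 <= X t) -> 0 <= expect X.
Proof. by move=> X_ge0; apply: sumr_ge0 => t _; exact: mulr_ge0. Qed.

Lemma ler_expect (X Y : T -> R) : (forall t, X t <= Y t) -> expect X <= expect Y.
Proof. by move=> le_XY; apply: ler_sum => t _; exact: ler_wpM2l. Qed.

Hypothesis w_mass : \sum_t w t = 1.

Lemma expect_cst (c : R) : expect (fun=> c) = c.
Proof. by rewrite /expect -mulr_suml w_mass mul1r. Qed.

Lemma markov_lb (P : T -> Prop) (F : T -> R) :
  (forall t, 0 <= F t) -> (forall t, F t < 1 -> P t) ->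
  1 - expect F <= \sum_t (if `[< P t >] then w t else 0).
Proof.
move=> F_ge0 F_lt1; rewrite -[1]w_mass /expect -sumrB.
apply: ler_sum => t _; have := w_ge0 t; have := F_ge0 t.
case: (asboolP (P t)) => [_|notP]; first nra.
have : 1 <= F t by rewrite leNgt; apply/negP => /F_lt1.
nra.
Qed.

End Expectation.

Definition prodw (I T : finType) (w : T -> R) (f : {ffun I -> T}) : R :=
  \prod_i w (f i).

Definition pairw (A B : finType) (wa : A -> R) (wb : B -> R) (u : A * B) : R :=
  wa u.1 * wb u.2.

Section ProductWeight.
Context {I T : finType} {w : T -> R}.

Lemma prodw_ge0 : (forall t, 0 <= w t) -> forall f : {ffun I -> T}, 0 <= prodw w f.
Proof. by move=> w_ge0 f; apply: prodr_ge0 => i _; exact: w_ge0. Qed.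

Lemma expect_prodw (F : I -> T -> R) :
  expect (prodw w) (fun f => \prod_i F i (f i)) = \prod_i expect w (F i).
Proof.
by rewrite /expect bigA_distr_bigA; apply: eq_bigr => f _; rewrite -big_split.
Qed.

Lemma prodw_mass : \sum_t w t = 1 -> \sum_(f : {ffun I -> T}) prodw w f = 1.
Proof.
by move=> w_mass; rewrite /prodw -(bigA_distr_bigA (fun=> w)) big1.
Qed.

Lemma expect_prodw_coord (k : I) (g : T -> R) :
  \sum_t w t = 1 -> expect (prodw w) (fun f => g (f k)) = expect w g.
Proof.
move=> w_mass; pose F i := if i == k then g else fun=> 1.
have Fk (f : {ffun I -> T}) : \prod_i F i (f i) = g (f k).
  by rewrite (bigD1 k) //= /F eqxx big1 ?mulr1 // => i /negbTE ->.
under eq_fun do rewrite -Fk.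
rewrite expect_prodw (bigD1 k) //= /F eqxx big1 ?mulr1 // => i /negbTE ->.
exact: expect_cst.
Qed.

Lemma expect_prodw_cond (k : I) (G : T -> R) (H : T -> T -> R) :
  expect (prodw w) (fun f => G (f k) * \prod_(i | i != k) H (f k) (f i)) =
  expect w (fun t => G t * \prod_(i | i != k) expect w (H t)).
Proof.
pose F t i u := if i == k then (if u == t then w t * G t else 0) else w u * H t u.
have splitk (f : {ffun I -> T}) : prodw w f * (G (f k) * \prod_(i | i != k) H (f k) (f i)) =
    \sum_t \prod_i F t i (f i).
  rewrite [RHS](bigD1 (f k)) //= [X in _ + X]big1 => [|t /negbTE ftN]; last first.
    by rewrite (bigD1 k) //= /F eqxx eq_sym ftN mul0r.
  rewrite addr0 [RHS](bigD1 k) //= /F !eqxx /prodw (bigD1 k) //=.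
  under [in RHS]eq_bigr => i /negbTE -> do [].
  rewrite big_split /=; ring.
rewrite /expect; under eq_bigr do rewrite splitk.
rewrite exchange_big; apply: eq_bigr => t _.
rewrite -(bigA_distr_bigA (F t)) (bigD1 k) //= /F eqxx.
rewrite (bigD1 t) //= eqxx big1 ?addr0 => [|u /negbTE -> //].
by rewrite -mulrA; congr (_ * (_ * _)); apply: eq_bigr => i /negbTE ->.
Qed.

Lemma expect_exp_sum_le (g : I -> T -> R) (c : I -> R) :
  (forall t, 0 <= w t) -> (forall i, expect w (fun t => exp (g i t)) <= exp (c i)) ->
  expect (prodw w) (fun f => exp (\sum_i g i (f i))) <= exp (\sum_i c i).
Proof.
move=> w_ge0 le_gc; under eq_fun do rewrite exp_sum.
rewrite (expect_prodw (fun i t => exp (g i t))) exp_sum; apply: ler_prod => i _.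
by rewrite le_gc expect_ge0 // => t; exact: ltW (exp_gt0 _).
Qed.

End ProductWeight.

Section PairWeight.
Context {A B : finType} {wa : A -> R} {wb : B -> R}.

Lemma pairw_ge0 : (forall a, 0 <= wa a) -> (forall b, 0 <= wb b) ->
  forall u, 0 <= pairw wa wb u.
Proof. by move=> wa_ge0 wb_ge0 u; exact: mulr_ge0. Qed.

Lemma expect_pairw (H : A * B -> R) :
  expect (pairw wa wb) H = expect wa (fun a => expect wb (fun b => H (a, b))).
Proof.
rewrite /expect; under [RHS]eq_bigr do rewrite mulr_sumr.
by rewrite pair_bigA; apply: eq_bigr => -[a b] _; rewrite /pairw mulrA.
Qed.

Lemma expect_pairw_fst (g : A -> R) :
  \sum_b wb b = 1 -> expect (pairw wa wb) (fun u => g u.1) = expect wa g.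
Proof.
by move=> wb_mass; rewrite expect_pairw /=; apply: eq_bigr => a _; rewrite expect_cst.
Qed.

Lemma expect_pairw_snd (g : B -> R) :
  \sum_a wa a = 1 -> expect (pairw wa wb) (fun u => g u.2) = expect wb g.
Proof. by move=> wa_mass; rewrite expect_pairw /= expect_cst. Qed.

Lemma pairw_mass : \sum_a wa a = 1 -> \sum_b wb b = 1 -> \sum_u pairw wa wb u = 1.
Proof.
move=> wa_mass wb_mass.
by rewrite /pairw -(pair_bigA _ (fun a b => wa a * wb b)) -big_distrlr /= wa_mass wb_mass mulr1.
Qed.

End PairWeight.

Definition b2r (b : bool) : R := (b : nat)%:R.

Section Bernoulli.
Variable r : R.
Hypothesis r_01 : 0 <= r <= 1.

Lemma bern_ge0 b : 0 <= bern r b.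
Proof. by case/andP: r_01 => ? ?; case: b => /=; lra. Qed.

Lemma bern_mass : \sum_b bern r b = 1.
Proof. by rewrite big_bool /=; ring. Qed.

Lemma expect_bern (g : bool -> R) : expect (bern r) g = (1 - r) * g false + r * g true.
Proof. by rewrite /expect big_bool /= addrC. Qed.

Lemma bern_mgf (t : R) : -(1/2) <= t <= 1/2 ->
  expect (bern r) (fun b => exp (t * b2r b)) <= exp (r * (t + 2 * t ^+ 2)).
Proof.
move=> t_small; rewrite expect_bern /b2r /= mulr0 mulr1 expR0.
case/andP: r_01 => r_ge0 _.
have := ler_wpM2l r_ge0 (exp_le_quadratic t_small).
have := exp_ge1Dx (r * (t + 2 * t ^+ 2)); lra.
Qed.

Lemma bern_centered_mgf (t : R) : -(1/2) <= t <= 1/2 ->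
  expect (bern r) (fun b => exp (t * (b2r b - r))) <= exp (2 * r * t ^+ 2).
Proof.
move=> t_small.
have shift b : exp (t * (b2r b - r)) = exp (- (t * r)) * exp (t * b2r b).
  by rewrite expD; congr exp; ring.
under eq_fun do rewrite shift.
rewrite expectZ; apply: le_trans (ler_wpM2l (ltW (exp_gt0 _)) (bern_mgf t_small)) _.
by rewrite expD ler_exp; lra.
Qed.

End Bernoulli.

Definition ones (l : nat) (x : {ffun 'I_l -> bool}) : R := \sum_j b2r (x j).

Definition centered_dot (l : nat) (r : R) (a x : {ffun 'I_l -> bool}) : R :=
  \sum_j b2r (a j) * (b2r (x j) - r).

Lemma b2r_ge0 b : 0 <= b2r b. Proof. by case: b. Qed.

Lemma ones_ge0 l (x : {ffun 'I_l -> bool}) : 0 <= ones x.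
Proof. by apply: sumr_ge0 => j _; exact: b2r_ge0. Qed.

Section VectorMgf.
Variables (l : nat) (r : R).
Hypothesis r_01 : 0 <= r <= 1.

Lemma expect_exp_ones (t : R) : -(1/2) <= t <= 1/2 ->
  expect (prodw (bern r)) (fun x : {ffun 'I_l -> bool} => exp (t * ones x)) <=
  exp (l%:R * r * (t + 2 * t ^+ 2)).
Proof.
move=> t_small; under eq_fun do rewrite /ones mulr_sumr.
rewrite -mulrA mulr_natl -[l in _ *+ l]card_ord -sumr_const.
apply: (expect_exp_sum_le (g := fun _ b => t * b2r b)) (bern_ge0 r_01) _ => j.
exact: bern_mgf.
Qed.

Lemma expect_exp_centered_dot (a : {ffun 'I_l -> bool}) (t : R) : -(1/2) <= t <= 1/2 ->
  expect (prodw (bern r)) (fun x => exp (t * centered_dot r a x)) <=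
  exp (2 * r * t ^+ 2 * ones a).
Proof.
move=> t_small; under eq_fun do rewrite /centered_dot mulr_sumr.
have -> : 2 * r * t ^+ 2 * ones a = \sum_j 2 * r * (t * b2r (a j)) ^+ 2.
  by rewrite /ones mulr_sumr; apply: eq_bigr => j _; case: (a j); rewrite /b2r /=; ring.
apply: (expect_exp_sum_le (g := fun j b => t * (b2r (a j) * (b2r b - r)))) (bern_ge0 r_01) _.
move=> j; under eq_fun do rewrite mulrA.
apply: bern_centered_mgf => //; case: (a j); rewrite /b2r /= ?mulr1 ?mulr0 //.
by apply/andP; split; lra.
Qed.

End VectorMgf.

Definition label_count n m K (d : sample n m K) (i : 'I_m) : R :=
  \sum_l b2r ((d l).2 i).

Definition crosstalk n m K (p : R) (d : sample n m K) (k : 'I_K) (i : 'I_m) : R :=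
  \sum_(l | l != k) b2r ((d l).2 i) * centered_dot p (d k).1 (d l).1.

Lemma hebb_response n m K (p : R) (d : sample n m K) k i :
  (hebb_W p d *m vec01 (d k).1) i 0 =
  b2r ((d k).2 i) * (ones (d k).1 * (1 - p)) + crosstalk p d k i.
Proof.
rewrite /hebb_W mulmx_suml summxE (bigD1 k) //=; congr (_ + _).
  rewrite -mulmxA mxE big_ord1 !mxE /ones mulr_suml; congr (_ * _).
  by apply: eq_bigr => j _; rewrite !mxE /b2r; case: ((d k).1 j) => /=; ring.
apply: eq_bigr => l _; rewrite -mulmxA mxE big_ord1 !mxE; congr (_ * _).
by apply: eq_bigr => j _; rewrite !mxE /b2r; ring.
Qed.

Lemma thr_maps_hebb n m K (p : R) (d : sample n m K) (b : 'cV[R]_m) k :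
  0 <= p <= 1/2 ->
  (forall i, n%:R * p / 8 < b i 0 < n%:R * p / 4) ->
  3 * (n%:R * p) / 4 < ones (d k).1 ->
  (forall i, `|crosstalk p d k i| < n%:R * p / 8) ->
  thr_maps (hebb_W p d) b (d k).1 (d k).2.
Proof.
move=> /andP[p_ge0 p_le] b_range x_large small_cross i /=.
have -> : (hebb_W p d *m vec01 (d k).1 - b) i 0 =
    (hebb_W p d *m vec01 (d k).1) i 0 - b i 0 by rewrite !mxE.
rewrite hebb_response.
have /andP[b_lo b_hi] := b_range i.
have := small_cross i; rewrite ltr_norml => /andP[N_lo N_hi].
have half_le : ones (d k).1 / 2 <= ones (d k).1 * (1 - p).
  by have := ones_ge0 (d k).1; nra.
by rewrite /b2r; case: ((d k).2 i) => /=; split => // _; lra.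
Qed.

Section Potential.
Variables (n m K : nat) (p q : R).
Notation np := (n%:R * p).
Notation Kq := (K%:R * q).
Implicit Types (d : sample n m K) (k : 'I_K) (i : 'I_m).

Definition count_potential d i := exp ((label_count d i - 3 * Kq) / 2).

Definition sparse_potential d k := exp ((3 * np / 4 - ones (d k).1) / 16).

Definition dense_potential d k := exp ((ones (d k).1 - 2 * np) / 4).

(* The compensator 2 p t^2 |x_k| (3Kq - sum_{l <> k} y_l(i)) turns the contribution of
   each sample l <> k, given sample k, into a factor of mean at most 1
   ([expect_crosstalk_factor]); it is nonnegative while the label count is below 3Kq. *)
Definition crosstalk_potential (t : R) d k i :=
  (if ones (d k).1 <= 2 * np then 1 else 0) *
  exp (2 * p * t ^+ 2 * ones (d k).1 * (3 * Kq - \sum_(l | l != k) b2r ((d l).2 i)) +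
       t * crosstalk p d k i - `|t| * (np / 8)).

Definition potential (lam : R) d :=
  \sum_i count_potential d i + \sum_k (sparse_potential d k + dense_potential d k) +
  \sum_k \sum_i (crosstalk_potential lam d k i + crosstalk_potential (- lam) d k i).

Lemma crosstalk_potential_ge0 t d k i : 0 <= crosstalk_potential t d k i.
Proof. by rewrite mulr_ge0 ?(ltW (exp_gt0 _)) //; case: ifP. Qed.

Lemma potential_ge0 lam d : 0 <= potential lam d.
Proof.
have e_ge0 x : 0 <= exp x := ltW (exp_gt0 x).
rewrite !addr_ge0 //; apply: sumr_ge0 => j _.
- exact: e_ge0.
- exact: addr_ge0 (e_ge0 _) (e_ge0 _).
- by apply: sumr_ge0 => i _; rewrite addr_ge0 ?crosstalk_potential_ge0.
Qed.

Lemma potential_summands_lt1 lam d : potential lam d < 1 ->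
  [/\ forall i, count_potential d i < 1,
      forall k, sparse_potential d k < 1 /\ dense_potential d k < 1 &
      forall k i, crosstalk_potential lam d k i < 1 /\ crosstalk_potential (- lam) d k i < 1].
Proof.
have e_ge0 x : 0 <= exp x := ltW (exp_gt0 x).
have cross_ge0 t k i := crosstalk_potential_ge0 t d k i.
rewrite /potential.
set S1 := \sum_i count_potential d i.
set S2 := \sum_k (sparse_potential d k + dense_potential d k).
set S3 := \sum_k \sum_i _ => pot_lt1.
have S1_ge0 : 0 <= S1 by apply: sumr_ge0 => i _; exact: e_ge0.
have S2_ge0 : 0 <= S2 by apply: sumr_ge0 => k _; exact: addr_ge0 (e_ge0 _) (e_ge0 _).
have S3_ge0 : 0 <= S3.
  by apply: sumr_ge0 => k _; apply: sumr_ge0 => i _; exact: addr_ge0.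
split=> [i|k|k i].
- apply: le_lt_trans (ler_sum_term (F := count_potential d) i (fun=> e_ge0 _)) _.
  by rewrite -/S1; lra.
- have : sparse_potential d k + dense_potential d k < 1.
    apply: le_lt_trans (ler_sum_term (F := fun k => sparse_potential d k + dense_potential d k)
      k (fun=> addr_ge0 (e_ge0 _) (e_ge0 _))) _.
    by rewrite -/S2; lra.
  have := e_ge0 ((3 * np / 4 - ones (d k).1) / 16).
  by have := e_ge0 ((ones (d k).1 - 2 * np) / 4); rewrite /sparse_potential /dense_potential; lra.
have : crosstalk_potential lam d k i + crosstalk_potential (- lam) d k i < 1.
  apply: le_lt_trans (ler_sum_term (F := fun i =>
    crosstalk_potential lam d k i + crosstalk_potential (- lam) d k i) i _) _ => [j|].
    exact: addr_ge0.
  apply: le_lt_trans (ler_sum_term (F := fun k => \sum_i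
    (crosstalk_potential lam d k i + crosstalk_potential (- lam) d k i)) k _) _ => [j|].
    by apply: sumr_ge0 => i' _; exact: addr_ge0.
  by rewrite -/S3; lra.
by have := cross_ge0 lam k i; have := cross_ge0 (- lam) k i; lra.
Qed.

Lemma crosstalk_lt_of_potential_lt1 t d k i : 0 <= p ->
  label_count d i < 3 * Kq -> ones (d k).1 <= 2 * np ->
  crosstalk_potential t d k i < 1 -> t * crosstalk p d k i < `|t| * (np / 8).
Proof.
move=> p_ge0 count_small x_small; rewrite /crosstalk_potential x_small mul1r exp_lt1.
have : \sum_(l | l != k) b2r ((d l).2 i) <= label_count d i.
  by rewrite /label_count [X in _ <= X](bigD1 k) //= lerDr b2r_ge0.
have : 0 <= 2 * p * t ^+ 2 * ones (d k).1.
  by apply: mulr_ge0 (ones_ge0 _); apply: mulr_ge0 (sqr_ge0 _); lra.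
move: (2 * p * t ^+ 2 * ones (d k).1) => c c_ge0 rest_le.
have : 0 <= c * (3 * Kq - \sum_(l | l != k) b2r ((d l).2 i)) by rewrite mulr_ge0 // subr_ge0; lra.
lra.
Qed.

Lemma thr_maps_of_potential_lt1 lam d : 0 < lam -> 0 <= p <= 1/2 ->
  potential lam d < 1 ->
  forall b : 'cV[R]_m, (forall i, np / 8 < b i 0 < np / 4) ->
  forall k, thr_maps (hebb_W p d) b (d k).1 (d k).2.
Proof.
move=> lam_gt0 p_range /potential_summands_lt1[count_lt1 ones_lt1 cross_lt1] b b_range k.
have /andP[p_ge0 _] := p_range.
have count_small i : label_count d i < 3 * Kq by have := count_lt1 i; rewrite exp_lt1; lra.
have [] := ones_lt1 k; rewrite !exp_lt1 => x_large x_small.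
apply: thr_maps_hebb => // [|i]; first lra.
have x_le : ones (d k).1 <= 2 * np by lra.
have [/crosstalk_lt_of_potential_lt1 pos_lt /crosstalk_lt_of_potential_lt1 neg_lt] := cross_lt1 k i.
have := pos_lt p_ge0 (count_small i) x_le; have := neg_lt p_ge0 (count_small i) x_le.
rewrite normrN gtr0_norm // ltr_norml => ? ?.
by apply/andP; split; rewrite -(ltr_pM2l lam_gt0); lra.
Qed.

End Potential.

(* Convertible to [sample_weight p q]; this form exposes the product structure. *)
Definition sample_law n m K (p q : R) : sample n m K -> R :=
  prodw (pairw (prodw (bern p)) (prodw (bern q))).

Section PotentialMean.
Variables (n m K : nat) (p q : R).
Hypotheses (p_01 : 0 <= p <= 1) (q_01 : 0 <= q <= 1).
Notation np := (n%:R * p).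
Notation Kq := (K%:R * q).
Notation item := ({ffun 'I_n -> bool} * {ffun 'I_m -> bool})%type.
Notation pair_law := (pairw (prodw (bern p)) (prodw (bern q))).

Lemma pair_law_ge0 (u : item) : 0 <= pair_law u.
Proof. by apply: pairw_ge0 => x; apply: prodw_ge0 => b; exact: bern_ge0. Qed.

Lemma pair_law_mass : \sum_(u : item) pair_law u = 1.
Proof. by rewrite pairw_mass // prodw_mass // bern_mass. Qed.

Lemma sample_law_ge0 (d : sample n m K) : 0 <= sample_law p q d.
Proof. exact: prodw_ge0 pair_law_ge0 d. Qed.

Lemma sample_law_mass : \sum_(d : sample n m K) sample_law p q d = 1.
Proof. exact: prodw_mass pair_law_mass. Qed.

Lemma expect_count_potential i :
  expect (sample_law p q) (fun d : sample n m K => count_potential q d i) <= exp (- (Kq / 2)).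
Proof.
have factor_out (d : sample n m K) : count_potential q d i =
    exp (- (3 * Kq / 2)) * exp (\sum_l 1 / 2 * b2r ((d l).2 i)).
  by rewrite expD -mulr_sumr; congr exp; rewrite /label_count; lra.
under eq_fun do rewrite factor_out.
have mgf : expect (sample_law p q) (fun d : sample n m K =>
    exp (\sum_l 1 / 2 * b2r ((d l).2 i))) <= exp (\sum_(l < K) q).
  apply: (expect_exp_sum_le (g := fun _ (u : item) => 1 / 2 * b2r (u.2 i)))
    pair_law_ge0 _ => l.
  rewrite (expect_pairw_snd (fun y : {ffun 'I_m -> bool} => exp (1 / 2 * b2r (y i))))
    ?prodw_mass ?bern_mass //.
  rewrite (expect_prodw_coord i (fun b => exp (1 / 2 * b2r b))) ?bern_mass //.
  by apply: le_trans (bern_mgf q_01 _) _; rewrite ?ler_exp; lra.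
rewrite expectZ; apply: le_trans (ler_wpM2l (ltW (exp_gt0 _)) mgf) _.
by rewrite expD sumr_const card_ord -mulr_natl ler_exp; lra.
Qed.

Lemma expect_sparse_potential k :
  expect (sample_law p q) (fun d : sample n m K => sparse_potential p d k) <=
  exp (- (np / 128)).
Proof.
rewrite (expect_prodw_coord k (fun u : item => exp ((3 * np / 4 - ones u.1) / 16)))
  ?pair_law_mass // (expect_pairw_fst (fun x => exp ((3 * np / 4 - ones x) / 16)))
  ?prodw_mass ?bern_mass //.
have factor_out x :
    exp ((3 * np / 4 - ones x) / 16) = exp (3 * np / 64) * exp (- (1 / 16) * ones x).
  by rewrite expD; congr exp; lra.
under eq_fun do rewrite factor_out.
rewrite expectZ; apply: le_trans (ler_wpM2l (ltW (exp_gt0 _)) (expect_exp_ones n p_01 _)) _.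
  by apply/andP; split; lra.
by rewrite expD ler_exp; lra.
Qed.

Lemma expect_dense_potential k :
  expect (sample_law p q) (fun d : sample n m K => dense_potential p d k) <=
  exp (- (np / 8)).
Proof.
rewrite (expect_prodw_coord k (fun u : item => exp ((ones u.1 - 2 * np) / 4)))
  ?pair_law_mass // (expect_pairw_fst (fun x => exp ((ones x - 2 * np) / 4)))
  ?prodw_mass ?bern_mass //.
have factor_out x : exp ((ones x - 2 * np) / 4) = exp (- (np / 2)) * exp (1 / 4 * ones x).
  by rewrite expD; congr exp; lra.
under eq_fun do rewrite factor_out.
rewrite expectZ; apply: le_trans (ler_wpM2l (ltW (exp_gt0 _)) (expect_exp_ones n p_01 _)) _.
  by apply/andP; split; lra.
by rewrite expD ler_exp; lra.
Qed.

Lemma expect_crosstalk_factor (a : {ffun 'I_n -> bool}) (t : R) i : -(1/2) <= t <= 1/2 ->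
  expect pair_law (fun v : item =>
    exp (b2r (v.2 i) * (t * centered_dot p a v.1 - 2 * p * t ^+ 2 * ones a))) <= 1.
Proof.
move=> t_small; set th := 2 * p * t ^+ 2 * ones a.
have inner x : expect (prodw (bern q))
    (fun y : {ffun 'I_m -> bool} => exp (b2r (y i) * (t * centered_dot p a x - th))) =
    (1 - q) + q * exp (- th) * exp (t * centered_dot p a x).
  rewrite (expect_prodw_coord i (fun b => exp (b2r b * (t * centered_dot p a x - th))))
    ?bern_mass // expect_bern /b2r /= !mul0r !mul1r expR0 mulr1 -mulrA expD.
  by congr (_ + _ * exp _); lra.
rewrite expect_pairw /=; under eq_fun do rewrite inner.
rewrite expectD !expect_cst ?prodw_mass ?bern_mass // expectZ.
have := expect_exp_centered_dot p_01 a t_small; rewrite -/th => mgf.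
have := ler_wpM2l (mulr_ge0 (proj1 (andP q_01)) (ltW (exp_gt0 (- th)))) mgf.
by rewrite -[q * _ * exp th]mulrA expD addNr expR0 mulr1; lra.
Qed.

Lemma expect_crosstalk_potential (t : R) k i : -(1/2) <= t <= 1/2 ->
  expect (sample_law p q) (fun d : sample n m K => crosstalk_potential p q t d k i) <=
  exp (12 * p * t ^+ 2 * np * Kq - `|t| * (np / 8)).
Proof.
move=> t_small.
pose head (u : item) := (if ones u.1 <= 2 * np then 1 else 0) *
  exp (2 * p * t ^+ 2 * ones u.1 * (3 * Kq) - `|t| * (np / 8)).
pose factor (u v : item) :=
  exp (b2r (v.2 i) * (t * centered_dot p u.1 v.1 - 2 * p * t ^+ 2 * ones u.1)).
have factorize (d : sample n m K) :
    crosstalk_potential p q t d k i = head (d k) * \prod_(l | l != k) factor (d k) (d l).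
  rewrite /crosstalk_potential /head -[RHS]mulrA; congr (_ * _).
  rewrite /factor -exp_sum expD; congr exp.
  rewrite /crosstalk mulr_sumr.
  under [X in _ = _ + X]eq_bigr do rewrite mulrBr mulrCA.
  by rewrite sumrB -mulr_suml; ring.
under eq_fun do rewrite factorize.
set bound := exp (12 * p * t ^+ 2 * np * Kq - `|t| * (np / 8)).
rewrite (expect_prodw_cond k head factor) -(expect_cst pair_law_mass bound).
apply: ler_expect => [u|u]; first exact: pair_law_ge0.
have head_ge0 : 0 <= head u by rewrite mulr_ge0 ?(ltW (exp_gt0 _)) //; case: ifP.
apply: le_trans (_ : head u <= _).
  rewrite ler_piMr // prodr_ile1 // => l _; apply/andP; split.
    by apply: expect_ge0 => [v|v]; [exact: pair_law_ge0 | exact: ltW (exp_gt0 _)].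
  exact: expect_crosstalk_factor.
rewrite /head; case: ifP => [x_small|_]; last by rewrite mul0r ltW ?exp_gt0.
rewrite mul1r /bound ler_exp lerD2r.
have c_ge0 : 0 <= 6 * p * t ^+ 2 * Kq.
  case/andP: p_01 q_01 => p_ge0 _ /andP[q_ge0 _].
  by rewrite mulr_ge0 ?(mulr_ge0 (ler0n _ K)) // mulr_ge0 ?sqr_ge0 //; lra.
by have := ler_wpM2l c_ge0 x_small; lra.
Qed.

Lemma expect_potential_le lam : 0 <= lam <= 1/2 ->
  expect (sample_law p q) (fun d : sample n m K => potential p q lam d) <=
  m%:R * exp (- (Kq / 2)) + K%:R * (exp (- (np / 128)) + exp (- (np / 8))) +
  K%:R * (m%:R * (2 * exp (12 * p * lam ^+ 2 * np * Kq - lam * (np / 8)))).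
Proof.
move=> /andP[lam_ge0 lam_le].
have cross_le t : `|t| = lam -> -(1/2) <= t <= 1/2 ->
    forall k i, expect (sample_law p q) (fun d : sample n m K => crosstalk_potential p q t d k i)
      <= exp (12 * p * lam ^+ 2 * np * Kq - lam * (np / 8)).
  move=> t_abs t_small k i; rewrite -t_abs real_normK ?num_real //.
  exact: expect_crosstalk_potential k i t_small.
have sum_le N (F : 'I_N -> R) c : (forall j, F j <= c) -> \sum_j F j <= N%:R * c.
  by move=> F_le; rewrite mulr_natl -[N in _ *+ N]card_ord -sumr_const; apply: ler_sum.
rewrite /potential !expectD !expect_sum.
apply: lerD; first apply: lerD.
- by apply: (sum_le) => i; exact: expect_count_potential.
- apply: (sum_le) => k; rewrite expectD.
  by apply: lerD; [exact: expect_sparse_potential | exact: expect_dense_potential].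
apply: (sum_le) => k; rewrite expect_sum; apply: (sum_le) => i; rewrite expectD.
have lam_abs : `|lam| = lam by rewrite ger0_norm.
have lam_small : -(1/2) <= lam <= 1/2 by apply/andP; split; lra.
have nlam_small : -(1/2) <= - lam <= 1/2 by apply/andP; split; lra.
have := cross_le _ lam_abs lam_small k i.
by have := cross_le (- lam) (etrans (normrN lam) lam_abs) nlam_small k i; lra.
Qed.

End PotentialMean.

Lemma Prob_ge_of_potential n m K (p q lam : R) (E : sample n m K -> Prop) :
  0 <= p <= 1 -> 0 <= q <= 1 -> (forall d, potential p q lam d < 1 -> E d) ->
  1 - expect (sample_law p q) (fun d : sample n m K => potential p q lam d) <= Prob p q E.
Proof.
move=> p_01 q_01.
apply: (markov_lb (T := sample n m K) (w := sample_law p q)) => //.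
- exact: sample_law_ge0.
- exact: sample_law_mass.
- exact: potential_ge0.
Qed.

Lemma Prob_ge0 n m K (p q : R) (E : sample n m K -> Prop) :
  0 <= p <= 1 -> 0 <= q <= 1 -> 0 <= Prob p q E.
Proof.
by move=> p_01 q_01; apply: sumr_ge0 => d _; case: ifP => // _; exact: sample_law_ge0.
Qed.

Lemma Prob_true n m K (p q : R) (E : sample n m K -> Prop) :
  (forall d, E d) -> Prob p q E = 1.
Proof.
move=> E_true; rewrite -(sample_law_mass n m K p q); apply: eq_bigr => d _.
by rewrite asboolT.
Qed.

Lemma exp_neg_mul_le1 (z x : R) : 0 < z -> ln z <= x -> exp (- x) * z <= 1.
Proof.
move=> z_gt0 ln_le; rewrite -(expN_ln z_gt0) ler_wpM2r ?(ltW z_gt0) // ler_exp; lra.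
Qed.

Lemma exp_neg_mul2_le1 (z x : R) : 2 <= z -> 2 * ln z <= x -> exp (- x) * (2 * z) <= 1.
Proof.
move=> z_ge2 ln_le; have z_gt0 : 0 < z by lra.
have half : exp (- (x / 2)) * z <= 1 by apply: exp_neg_mul_le1 => //; lra.
have -> : exp (- x) = exp (- (x / 2)) * exp (- (x / 2)) by rewrite expD; congr exp; lra.
have := ltW (exp_gt0 (- (x / 2))); nra.
Qed.

Lemma exists_crosstalk_rate (n K : nat) (p q z : R) :
  0 < p -> 0 < q -> 0 <= ln z ->
  256 * ln z <= n%:R * p -> K%:R * q * ln z <= 1 / 6144 * n%:R ->
  exists2 lam, 0 < lam <= 1/2 &
    2 * ln z <= lam * (n%:R * p / 8) - 12 * p * lam ^+ 2 * (n%:R * p) * (K%:R * q).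
Proof.
move=> p_gt0 q_gt0 ln_ge0 hC hc; set u := p * (K%:R * q).
have gain lam : lam * (n%:R * p / 8) - 12 * p * lam ^+ 2 * (n%:R * p) * (K%:R * q) =
    lam * (n%:R * p) * (1 / 8 - 12 * lam * u) by rewrite /u; ring.
have [u_ge|u_lt] := leP (1 / 96) u; last first.
  exists (1 / 2); first by apply/andP; split; lra.
  rewrite gain; have : n%:R * p * (12 * (1 / 2) * u) <= n%:R * p * (1 / 16).
    by apply: ler_wpM2l; lra.
  lra.
have u_gt0 : 0 < u by lra.
(* 1 / (192 u) maximizes lam (1/8 - 12 lam u). *)
exists (1 / (192 * u)).
  by apply/andP; split; [apply: divr_gt0 | rewrite ler_pdivrMr]; lra.
have Kq_gt0 : 0 < K%:R * q by rewrite -(pmulr_rgt0 _ p_gt0).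
have K_gt0 : 0 < K%:R :> R by rewrite -(pmulr_lgt0 _ q_gt0).
rewrite gain.
have -> : 1 / (192 * u) * (n%:R * p) * (1 / 8 - 12 * (1 / (192 * u)) * u) =
    n%:R / (3072 * (K%:R * q)).
  by rewrite /u; field; rewrite !lt0r_neq0.
rewrite ler_pdivlMr; lra.
Qed.

Lemma tail_sum_le (m K m0 e1 e2 e3 e4 : R) :
  1 <= m -> 0 < m0 -> 0 <= K ->
  e1 * m0 <= 1 -> e2 * (2 * (K * m0)) <= 1 -> 0 <= e3 <= e2 -> e4 * (2 * (K * m0)) <= 1 ->
  m * e1 + K * (e2 + e3) + K * (m * (2 * e4)) <= 3 * m / m0.
Proof.
move=> m_ge1 m0_gt0 K_ge0 e1_le e2_le /andP[e3_ge0 e3_le] e4_le.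
have m_ge0 : 0 <= m by lra.
have z_ge0 : 0 <= K * m0 by rewrite mulr_ge0 // ltW.
have e23_le : (e2 + e3) * (K * m0) <= (2 * e2) * (K * m0) by apply: ler_wpM2r => //; lra.
have := ler_wpM2l m_ge0 e1_le; have := ler_wpM2l m_ge0 e4_le.
by rewrite ler_pdivlMr //; lra.
Qed.

Lemma parameter_regime (n m K : nat) (p q m0 : R) :
  0 < q -> (0 < m)%N -> 3 * m%:R < m0 ->
  256 * ln m0 <= K%:R * q -> 256 * ln (K%:R * m0) <= n%:R * p ->
  [/\ 0 < m0, ln m0 <= K%:R * q / 2, 2 <= K%:R * m0, 0 < ln (K%:R * m0) &
      2 * ln (K%:R * m0) <= n%:R * p / 128].
Proof.
move=> q_gt0 m_gt0 m0_gt hC1 hC2.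
have m_ge1 : 1 <= m%:R :> R by rewrite ler1n.
have ln_m0_gt0 : 0 < ln m0 by apply: ln_gt0; lra.
have K_ge1 : 1 <= K%:R :> R.
  have : 0 < K%:R :> R by rewrite -(pmulr_lgt0 _ q_gt0); lra.
  by rewrite ltr0n ler1n.
have z_ge2 : 2 <= K%:R * m0 by have := ler_wpM2r (_ : 0 <= m0) K_ge1; lra.
have ln_z_gt0 : 0 < ln (K%:R * m0) by apply: ln_gt0; lra.
by split; lra.
Qed.

Lemma exists_potential_mean_le (n m K : nat) (p q m0 : R) :
  0 < p -> p <= 1/2 -> 0 < q -> q <= 1 -> (0 < m)%N -> 3 * m%:R < m0 ->
  256 * ln m0 <= K%:R * q -> 256 * ln (K%:R * m0) <= n%:R * p ->
  K%:R * q * ln (K%:R * m0) <= 1 / 6144 * n%:R ->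
  exists2 lam, 0 < lam <= 1/2 &
    expect (sample_law p q) (fun d : sample n m K => potential p q lam d) <= 3 * m%:R / m0.
Proof.
move=> p_gt0 p_le q_gt0 q_le.
have p_01 : 0 <= p <= 1 by apply/andP; split; lra.
have q_01 : 0 <= q <= 1 by apply/andP; split; lra.
have dense_le : exp (- (n%:R * p / 8)) <= exp (- (n%:R * p / 128)).
  by rewrite ler_exp; have := mulr_ge0 (ler0n R n) (ltW p_gt0); lra.
move=> m_gt0 m0_gt hC1 hC2 hc.
have [m0_gt0 count_tail z_ge2 ln_z_gt0 ones_tail] := parameter_regime q_gt0 m_gt0 m0_gt hC1 hC2.
have [lam /andP[lam_gt0 lam_le] gain] :=
  exists_crosstalk_rate p_gt0 q_gt0 (ltW ln_z_gt0) hC2 hc.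
exists lam; first by rewrite lam_gt0.
apply: le_trans (expect_potential_le n m K p_01 q_01 (_ : 0 <= lam <= 1/2)) _.
  by rewrite (ltW lam_gt0).
apply: tail_sum_le; rewrite ?ler1n ?ler0n //.
- exact: exp_neg_mul_le1.
- exact: exp_neg_mul2_le1.
- by rewrite dense_le (ltW (exp_gt0 _)).
by rewrite -opprB exp_neg_mul2_le1.
Qed.

Theorem theorem7p2 :
  exists C c : R, 0 < C /\ 0 < c /\
  forall (n m K : nat) (p q m0 : R),
    0 < p -> p <= 1 / 2 -> 0 < q -> q < 1 ->
    m%:R <= m0 ->
    C * ln m0 <= K%:R * q ->
    C * ln (K%:R * m0) <= n%:R * p ->
    K%:R * q * ln (K%:R * m0) <= c * n%:R ->
    1 - 3 * m%:R / m0 <= Prob p q (fun d : sample n m K => interpolable d) /\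
    1 - 3 * m%:R / m0 <=
      Prob p q (fun d : sample n m K =>
        forall b : 'cV[R]_m,
          (forall i : 'I_m, n%:R * p / 8 < b i 0 < n%:R * p / 4) ->
          forall k : 'I_K, thr_maps (hebb_W p d) b (d k).1 (d k).2).
Proof.
exists 256, (1 / 6144); split; first lra; split; first lra.
move=> n m K p q m0 p_gt0 p_le q_gt0 q_lt1.
have p_01 : 0 <= p <= 1 by apply/andP; split; lra.
have q_01 : 0 <= q <= 1 by apply/andP; split; lra.
move=> m_le hC1 hC2 hc; have [-> | m_gt0] := posnP m.
  rewrite mulr0 mul0r subr0; split; rewrite Prob_true // => d; last by move=> b _ k [].
  by exists 0, 0 => k [].
have [m0_le | m0_gt] := leP m0 (3 * m%:R).
  have m_ge1 : 1 <= m%:R :> R by rewrite ler1n.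
  have : 1 <= 3 * m%:R / m0 by rewrite ler_pdivlMr; lra.
  by split; apply: le_trans (Prob_ge0 _ p_01 q_01); lra.
have [lam /andP[lam_gt0 _] mean_le] :=
  exists_potential_mean_le p_gt0 p_le q_gt0 (ltW q_lt1) m_gt0 m0_gt hC1 hC2 hc.
have [_ _ _ ln_z_gt0 _] := parameter_regime q_gt0 m_gt0 m0_gt hC1 hC2.
have np_gt0 : 0 < n%:R * p by apply: lt_le_trans hC2; rewrite mulr_gt0.
have p_half : 0 <= p <= 1/2 by rewrite (ltW p_gt0).
have hebb d := thr_maps_of_potential_lt1 (d := d) lam_gt0 p_half.
split; apply: le_trans (Prob_ge_of_potential (lam := lam) p_01 q_01 _); rewrite ?lerB //.
  move=> d /hebb good; exists (hebb_W p d), (const_mx (3 * (n%:R * p) / 16)).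
  by apply: good => i; rewrite mxE; apply/andP; split; lra.
exact: hebb.
Qed.
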